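(* Let $S$ be a Boolean inverse monoid satisfying condition (H). Then for all $s,t\in S$, $s^*e_{st}s=e_{ts}$.
   Context: An inverse semigroup is a semigroup $S$ in which every $s$ has a unique $s^*$ with $ss^*s=s$, $s^*ss^*=s^*$; assumed countable with a zero. $E(S)$ is its set of idempotents. A Boolean inverse monoid is an inverse monoid in which every finite compatible set (pairwise $s^*t,st^*\in E(S)$) has a join, multiplication distributes over such joins, and $E(S)$ is a Boolean algebra. For $Z\subseteq W\subseteq E(S)$, $Z$ is a cover of $W$ if every nonzero $w\in W$ has some $z\in Z$ with $zw\ne0$. For $s\in S$ let $\mathcal J_s=\{e\in E(S): se=e\}$. Condition (H): each $\mathcal J_s$ admits a finite cover $C\subseteq\mathcal J_s$. Under (H), $e_s$ denotes $\bigvee_{c\in C}c$ for a finite cover $C$ of $\mathcal J_s$; this is independent of $C$, and $\mathcal J_s=\{e: e\le e_s\}$. *)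

From Stdlib Require Import List.
Import ListNotations.

Section BIM.
Context {T : Type}.
Variable mul : T -> T -> T.
Variable star : T -> T.
Variables one zero : T.

Definition idem (e : T) : Prop := mul e e = e.

Definition nat_le (s t : T) : Prop := s = mul t (mul (star s) s).

Definition compatible (s t : T) : Prop :=
  idem (mul (star s) t) /\ idem (mul s (star t)).

Definition compatible_list (A : list T) : Prop :=
  forall a b, In a A -> In b A -> compatible a b.

Definition is_join (A : list T) (j : T) : Prop :=
  (forall a, In a A -> nat_le a j) /\
  (forall u, (forall a, In a A -> nat_le a u) -> nat_le j u).

Definition inverse_monoid_with_zero : Prop :=
  (forall a b c, mul a (mul b c) = mul (mul a b) c) /\
  (forall s, mul s (mul (star s) s) = s /\ mul (star s) (mul s (star s)) = star s) /\
  (forall s x, mul s (mul x s) = s -> mul x (mul s x) = x -> x = star s) /\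
  (forall s, mul one s = s /\ mul s one = s) /\
  (forall s, mul zero s = zero /\ mul s zero = zero) /\
  (exists f : T -> nat, forall x y, f x = f y -> x = y).

Section Poset.
Variable P : T -> Prop.
Variable le : T -> T -> Prop.

Definition is_lub_in (x y j : T) : Prop :=
  P j /\ le x j /\ le y j /\ forall u, P u -> le x u -> le y u -> le j u.
Definition is_glb_in (x y m : T) : Prop :=
  P m /\ le m x /\ le m y /\ forall u, P u -> le u x -> le u y -> le u m.

Definition boolean_algebra_on : Prop :=
  exists bot top, P bot /\ P top /\
  (forall x, P x -> le bot x /\ le x top) /\
  (forall x y, P x -> P y -> exists j, is_lub_in x y j) /\
  (forall x y, P x -> P y -> exists m, is_glb_in x y m) /\
  (forall x y z yz m a b c, P x -> P y -> P z ->
     is_lub_in y z yz -> is_glb_in x yz m ->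
     is_glb_in x y a -> is_glb_in x z b -> is_lub_in a b c -> m = c) /\
  (forall x, P x -> exists y, P y /\ is_glb_in x y bot /\ is_lub_in x y top).
End Poset.

Definition boolean_inverse_monoid : Prop :=
  inverse_monoid_with_zero /\
  (forall A, compatible_list A -> exists j, is_join A j) /\
  (forall A j s, compatible_list A -> is_join A j ->
     is_join (map (mul s) A) (mul s j) /\
     is_join (map (fun a => mul a s) A) (mul j s)) /\
  boolean_algebra_on idem nat_le.

Definition J (s e : T) : Prop := idem e /\ mul s e = e.

Definition is_cover (Z : list T) (W : T -> Prop) : Prop :=
  forall w, W w -> w <> zero -> exists z, In z Z /\ mul z w <> zero.

Definition condH : Prop :=
  forall s, exists C : list T, (forall c, In c C -> J s c) /\ is_cover C (J s).

Definition is_e (s e : T) : Prop :=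
  exists C : list T, (forall c, In c C -> J s c) /\ is_cover C (J s) /\ is_join C e.

End BIM.

(* The idempotents fixed by u form J_u, and e_u is the largest of them: if y is the
   Boolean complement of e_u and x is in J_u, then x y is in J_u and annihilated by
   every element of the cover (all lie below e_u), so x y = 0 and x <= e_u.
   Conjugation x |-> s^* x s maps J_st into J_ts and x |-> t^* x t maps J_ts into J_st.
   Hence s^* e_st s <= e_ts and t^* e_ts t <= e_st; conjugating the latter by s gives
   e_ts = (ts)^* e_ts (ts) <= s^* e_st s. *)

From Stdlib Require Import List Classical.

Section InverseMonoid.

Context {T : Type} {mul : T -> T -> T} {star : T -> T}.

Local Infix "*" := mul.
Local Notation "x ^*" := (star x) (at level 2, format "x ^*").

Hypothesis mulA : forall a b c, a * (b * c) = a * b * c.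
Hypothesis regular : forall s, s * (s^* * s) = s /\ s^* * (s * s^*) = s^*.
Hypothesis star_uniq : forall s x, s * (x * s) = s -> x * (s * x) = x -> x = s^*.

Lemma mul_star_mul s : s * s^* * s = s.
Proof. rewrite <- mulA. apply regular. Qed.

Lemma star_mul_star s : s^* * s * s^* = s^*.
Proof. rewrite <- mulA. apply regular. Qed.

Lemma inverse_unique s x : s * x * s = s -> x * s * x = x -> x = s^*.
Proof. rewrite <- !mulA. apply star_uniq. Qed.

Lemma starK s : s^*^* = s.
Proof. symmetry. apply inverse_unique; [apply star_mul_star | apply mul_star_mul]. Qed.

Lemma star_idem e : idem mul e -> e^* = e.
Proof.
  intro He. symmetry. apply inverse_unique; unfold idem in He; rewrite !He; reflexivity.
Qed.

Lemma idem_mul_star s : idem mul (s * s^*).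
Proof. unfold idem. rewrite mulA, mul_star_mul. reflexivity. Qed.

Lemma idem_star_mul s : idem mul (s^* * s).
Proof. unfold idem. rewrite mulA, star_mul_star. reflexivity. Qed.

Lemma mul_idem_r x e : idem mul e -> x * e * e = x * e.
Proof. intro He. rewrite <- mulA. unfold idem in He. rewrite He. reflexivity. Qed.

Lemma idem_mul e f : idem mul e -> idem mul f -> idem mul (e * f).
Proof.
  intros He Hf.
  set (x := (e * f)^*).
  assert (Hx_inv : x * (e * f) * x = x) by apply star_mul_star.
  (* [f x e] is also an inverse of [e f], hence equals [x] and is idempotent. *)
  assert (Hx : f * x * e = x).
  { apply inverse_unique; rewrite !mulA, !mul_idem_r by assumption.
    - rewrite <- (mulA _ e f). apply mul_star_mul.
    - transitivity (f * (x * (e * f) * x) * e); [rewrite !mulA; reflexivity |].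
      rewrite Hx_inv. reflexivity. }
  assert (Hxx : idem mul x).
  { unfold idem. rewrite <- Hx at 1 2.
    transitivity (f * (x * (e * f) * x) * e); [rewrite !mulA; reflexivity |].
    rewrite Hx_inv. exact Hx. }
  unfold idem. rewrite <- (starK (e * f)). fold x. rewrite (star_idem x Hxx). exact Hxx.
Qed.

Lemma idem_comm e f : idem mul e -> idem mul f -> e * f = f * e.
Proof.
  intros He Hf.
  assert (Hef := idem_mul e f He Hf). assert (Hfe := idem_mul f e Hf He).
  rewrite <- (star_idem _ Hef). symmetry.
  apply inverse_unique; rewrite !mulA, !mul_idem_r by assumption;
    [rewrite <- (mulA _ e f) | rewrite <- (mulA _ f e)]; assumption.
Qed.

Lemma star_mul a b : (a * b)^* = b^* * a^*.
Proof.
  symmetry. apply inverse_unique.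
  - transitivity (a * a^* * a * (b * b^* * b)); [| rewrite !mul_star_mul; reflexivity].
    transitivity (a * (b * b^* * (a^* * a)) * b); [rewrite !mulA; reflexivity |].
    rewrite (idem_comm _ _ (idem_mul_star b) (idem_star_mul a)), !mulA. reflexivity.
  - transitivity (b^* * b * b^* * (a^* * a * a^*)); [| rewrite !star_mul_star; reflexivity].
    transitivity (b^* * (a^* * a * (b * b^*)) * a^*); [rewrite !mulA; reflexivity |].
    rewrite (idem_comm _ _ (idem_star_mul a) (idem_mul_star b)), !mulA. reflexivity.
Qed.

Lemma idem_nat_le x y : idem mul x -> nat_le mul star x y <-> x = y * x.
Proof.
  intro Hx. unfold nat_le. rewrite (star_idem x Hx). unfold idem in Hx. rewrite Hx. reflexivity.
Qed.

Lemma nat_le_antisym x y : nat_le mul star x y -> nat_le mul star y x -> x = y.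
Proof.
  unfold nat_le. intros Hxy Hyx.
  rewrite Hxy at 1. rewrite Hyx at 1.
  rewrite <- mulA, (idem_comm _ _ (idem_star_mul y) (idem_star_mul x)), mulA,
    (mulA x (x^*) x), mul_star_mul.
  symmetry. exact Hyx.
Qed.

Lemma idem_conj a x : idem mul x -> idem mul (a^* * x * a).
Proof.
  intro Hx. unfold idem.
  transitivity (a^* * (x * (a * a^*)) * x * a); [rewrite !mulA; reflexivity |].
  rewrite (idem_comm _ _ Hx (idem_mul_star a)), !mulA, star_mul_star, mul_idem_r by exact Hx.
  reflexivity.
Qed.

Lemma J_mul_star u x : J mul u x -> x * u^* = x.
Proof.
  intros [Hx Hux]. rewrite <- (star_idem x Hx) at 1. rewrite <- star_mul, Hux. apply star_idem, Hx.
Qed.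

Lemma J_star_mul u x : J mul u x -> u^* * u * x = x.
Proof.
  intro HJ. pose proof HJ as [Hx Hux].
  transitivity (x * (u^* * u) * x).
  - rewrite (idem_comm _ _ Hx (idem_star_mul u)), mul_idem_r by exact Hx. reflexivity.
  - rewrite mulA, (J_mul_star u x HJ), <- mulA, Hux. exact Hx.
Qed.

Lemma J_conj_fixed u x : J mul u x -> u^* * x * u = x.
Proof.
  intro HJ. pose proof HJ as [Hx Hux].
  rewrite <- Hux at 1. rewrite mulA, (J_star_mul u x HJ).
  rewrite <- (J_mul_star u x HJ) at 1.
  rewrite <- mulA, (idem_comm _ _ Hx (idem_star_mul u)), (J_star_mul u x HJ). reflexivity.
Qed.

Lemma J_mul_star_l a b x : J mul (a * b) x -> a * a^* * x = x.
Proof. intros [_ Hx]. rewrite <- Hx, !mulA, mul_star_mul. reflexivity. Qed.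

Lemma J_mul_domain a b x : J mul (a * b) x -> a^* * a * (b * x) = b * x.
Proof.
  intro HJ.
  assert (Hd : b^* * a^* * a * b * x = x).
  { rewrite <- (J_star_mul _ _ HJ) at 2. rewrite star_mul, !mulA. reflexivity. }
  rewrite <- Hd at 1.
  transitivity (a^* * a * (b * b^*) * (a^* * a) * b * x); [rewrite !mulA; reflexivity |].
  rewrite (idem_comm _ _ (idem_star_mul a) (idem_mul_star b)),
    (mul_idem_r _ _ (idem_star_mul a)).
  transitivity (b * (b^* * a^* * a * b * x)); [rewrite !mulA; reflexivity |].
  rewrite Hd. reflexivity.
Qed.

Lemma J_conj a b x : J mul (a * b) x -> J mul (b * a) (a^* * x * a).
Proof.
  intro HJ. pose proof HJ as [Hx Hux]. split; [apply idem_conj, Hx |].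
  transitivity (b * (a * a^* * x) * a); [rewrite !mulA; reflexivity |].
  rewrite (J_mul_star_l a b x HJ). rewrite <- Hux at 2.
  transitivity (a^* * a * (b * x) * a); [| rewrite !mulA; reflexivity].
  rewrite (J_mul_domain a b x HJ). reflexivity.
Qed.

Lemma max_J_conj s t e f :
  J mul (s * t) e -> (forall x, J mul (s * t) x -> e * x = x) ->
  J mul (t * s) f -> (forall x, J mul (t * s) x -> f * x = x) ->
  s^* * e * s = f.
Proof.
  intros He e_max Hf f_max.
  assert (Hg := J_conj s t e He).
  assert (Hk := J_conj t s f Hf).
  assert (Hfg := f_max _ Hg).
  assert (Hek := e_max _ Hk).
  (* f = s^* (t^* f t) s = s^* e (s s^* t^* f t) s = (s^* e s) f = f (s^* e s) = s^* e s *)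
  assert (Hf_conj : s^* * (t^* * f * t) * s = f).
  { transitivity ((t * s)^* * f * (t * s)); [rewrite star_mul, !mulA; reflexivity |].
    apply J_conj_fixed, Hf. }
  rewrite <- Hfg, (idem_comm _ _ (proj1 Hf) (proj1 Hg)).
  rewrite <- Hf_conj at 2. rewrite <- Hek, <- (J_mul_star_l s t _ Hk).
  transitivity (s^* * e * s * (s^* * (t^* * f * t) * s)); [rewrite Hf_conj; reflexivity |].
  rewrite !mulA. reflexivity.
Qed.

Context {one zero : T}.

Hypothesis one_mul : forall s, one * s = s.
Hypothesis zero_mul : forall s, zero * s = zero.
Hypothesis mul_zero : forall s, s * zero = zero.
Hypothesis join_mul_l : forall A j s, compatible_list mul star A -> is_join mul star A j ->
  is_join mul star (map (mul s) A) (s * j).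
Hypothesis boolean : boolean_algebra_on (idem mul) (nat_le mul star).

Local Notation le := (nat_le mul star).

Lemma nat_le_refl_idem x : idem mul x -> le x x.
Proof. intro Hx. apply idem_nat_le; [exact Hx | symmetry; exact Hx]. Qed.

Lemma zero_nat_le x : le zero x.
Proof. unfold nat_le. rewrite mul_zero, mul_zero. reflexivity. Qed.

Lemma nat_le_zero x : le x zero -> x = zero.
Proof. unfold nat_le. rewrite zero_mul. tauto. Qed.

Lemma idem_glb p q : idem mul p -> idem mul q -> is_glb_in (idem mul) le p q (p * q).
Proof.
  intros Hp Hq. assert (Hpq := idem_mul p q Hp Hq).
  split; [exact Hpq |]. split; [| split].
  - apply idem_nat_le; [exact Hpq |]. rewrite mulA. unfold idem in Hp. rewrite Hp. reflexivity.
  - apply idem_nat_le; [exact Hpq |].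
    rewrite (idem_comm p q Hp Hq), mulA. unfold idem in Hq. rewrite Hq. reflexivity.
  - intros x Hx Hxp Hxq. apply idem_nat_le in Hxp, Hxq; try exact Hx.
    apply idem_nat_le; [exact Hx |]. rewrite <- mulA, <- Hxq. exact Hxp.
Qed.

Lemma idem_complement e : idem mul e ->
  exists y, idem mul y /\ e * y = zero /\ forall x, idem mul x -> x * y = zero -> x * e = x.
Proof.
  intro He.
  destruct boolean as [bot [top [_ [_ [bounds [_ [_ [distr compl]]]]]]]].
  assert (bot_zero : bot = zero).
  { apply nat_le_zero, bounds. unfold idem. apply zero_mul. }
  destruct (compl e He) as [y [Hy [[_ [_ [_ glb_ey]]] lub_ey]]].
  exists y. split; [exact Hy | split].
  - destruct (idem_glb e y He Hy) as [Hey [ey_e [ey_y _]]].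
    apply nat_le_zero. rewrite <- bot_zero. exact (glb_ey _ Hey ey_e ey_y).
  - intros x Hx Hxy. symmetry.
    (* distributivity: x = x /\ (e \/ y) = (x /\ e) \/ (x /\ y) = x e \/ 0 *)
    apply (distr x e y top x (x * e) zero (x * e) Hx He Hy lub_ey).
    + split; [exact Hx | split; [apply nat_le_refl_idem, Hx | split; [apply bounds, Hx | tauto]]].
    + apply idem_glb; assumption.
    + rewrite <- Hxy. apply idem_glb; assumption.
    + assert (Hxe := idem_mul x e Hx He).
      split; [exact Hxe | split; [apply nat_le_refl_idem, Hxe |]].
      split; [apply zero_nat_le | tauto].
Qed.

Lemma join_unique A j j' : is_join mul star A j -> is_join mul star A j' -> j = j'.
Proof. intros [ub least] [ub' least']. apply nat_le_antisym; auto. Qed.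

Lemma join_idem C e : (forall c, In c C -> idem mul c) -> is_join mul star C e -> idem mul e.
Proof.
  intros HC [_ least].
  assert (e_le_one : le e one).
  { apply least. intros c Hc. unfold nat_le. rewrite one_mul, (star_idem c (HC c Hc)).
    symmetry. apply HC, Hc. }
  unfold nat_le in e_le_one. rewrite one_mul in e_le_one. rewrite e_le_one. apply idem_star_mul.
Qed.

Lemma join_mul_ub C e c : is_join mul star C e -> In c C -> idem mul c -> e * c = c.
Proof. intros [ub _] Hc Hci. symmetry. apply (idem_nat_le c e Hci), ub, Hc. Qed.

Lemma idems_compatible C : (forall c, In c C -> idem mul c) -> compatible_list mul star C.
Proof.
  intros HC a b Ha Hb. unfold compatible.
  rewrite (star_idem a (HC a Ha)), (star_idem b (HC b Hb)). split; apply idem_mul; auto.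
Qed.

Lemma is_e_J u e : is_e mul star zero u e -> J mul u e.
Proof.
  intros [C [HC [_ Hjoin]]].
  assert (HCi : forall c, In c C -> idem mul c) by (intros c Hc; apply HC, Hc).
  split; [exact (join_idem C e HCi Hjoin) |].
  assert (Hmap : map (mul u) C = C).
  { rewrite <- (map_id C) at 2. apply map_ext_in. intros c Hc. apply HC, Hc. }
  apply (join_unique C); [| exact Hjoin].
  rewrite <- Hmap at 1. apply join_mul_l; [apply idems_compatible, HCi | exact Hjoin].
Qed.

Lemma is_e_max u e x : is_e mul star zero u e -> J mul u x -> e * x = x.
Proof.
  intros He_def [Hx Hux].
  assert (He : idem mul e) by apply (is_e_J u e He_def).
  destruct He_def as [C [HC [cover Hjoin]]].
  destruct (idem_complement e He) as [y [Hy [Hey below_e]]].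
  rewrite (idem_comm e x He Hx). apply below_e; [exact Hx |].
  (* [x y] lies in J_u but is orthogonal to the cover, which lies below [e]. *)
  apply NNPP. intro Hxy.
  assert (Hxy_J : J mul u (x * y))
    by (split; [apply idem_mul; assumption | rewrite mulA, Hux; reflexivity]).
  destruct (cover (x * y) Hxy_J Hxy) as [c [Hc Hcxy]]. apply Hcxy.
  destruct (HC c Hc) as [Hci _].
  rewrite <- (join_mul_ub C e c Hjoin Hc Hci) at 1.
  rewrite (idem_comm e c He Hci), <- mulA, (idem_comm e (x * y) He (idem_mul x y Hx Hy)),
    <- (mulA x y e), (idem_comm y e Hy He), Hey, !mul_zero.
  reflexivity.
Qed.

End InverseMonoid.

Theorem mainTheorem6 (T : Type) (mul : T -> T -> T) (star : T -> T) (one zero : T)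
  (HB : boolean_inverse_monoid mul star one zero)
  (HH : condH mul zero)
  (s t est ets : T)
  (Hst : is_e mul star zero (mul s t) est)
  (Hts : is_e mul star zero (mul t s) ets) :
  mul (mul (star s) est) s = ets.
Proof.
  destruct HB as [[mulA [regular [star_uniq [unit [absorb _]]]]] [_ [join_mul boolean]]].
  pose proof (fun x => proj1 (unit x)) as one_mul.
  pose proof (fun x => proj1 (absorb x)) as zero_mul.
  pose proof (fun x => proj2 (absorb x)) as mul_zero.
  pose proof (fun A j x HA Hj => proj1 (join_mul A j x HA Hj)) as join_mul_l.
  pose proof (is_e_J (zero := zero) mulA regular star_uniq one_mul join_mul_l) as e_J.
  pose proof (is_e_max mulA regular star_uniq one_mul zero_mul mul_zero join_mul_l boolean)
    as e_max.
  exact (max_J_conj mulA regular star_uniq s t est ets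
    (e_J _ _ Hst) (fun x => e_max _ _ x Hst) (e_J _ _ Hts) (fun x => e_max _ _ x Hts)).
Qed.
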